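(* Let $u=u_1u_2\cdots u_t\in\{b,d\}^+$ be a nonempty word containing $i$ copies of $b$ and $j$ copies of $d$, and write $au(n)$ for $a(u_1(u_2(\cdots u_t(n)\cdots)))$ (similarly $ab(n)=a(b(n))$). Then for all $n\ge 1$, $$au(n)=F_{i+2j}\cdot ab(n)+F_{i+2j-1}\cdot a(n)+C(u)\cdot(2x(n)-1),$$ where $C(u)$ is defined recursively by $C(b)=0$, $C(d)=1$, and, for a nonempty word $v$ (with $i,j$ still the letter counts of $u$), $C(vb)=F_{i+2j-1}+C(v)$ if $u=vb$, and $C(vd)=F_{i+2j-1}-C(v)$ if $u=vd$.
   Context: $\varphi=(1+\sqrt5)/2$. Let $(F_n)_{n\ge 0}$ be the Fibonacci numbers: $F_0=0$, $F_1=1$, $F_n=F_{n-1}+F_{n-2}$ for $n\ge 2$. Define $(a(n))_{n\ge 0}$ (OEIS A105774) by $a(0)=0$, $a(1)=1$, and for $n\ge 2$, $a(n)=F_{j+1}-a(n-F_j)$, where $j\ge 2$ is the unique index with $F_j<n\le F_{j+1}$. Let $b(n)=\lfloor \varphi n\rfloor$, $d(n)=\lfloor\varphi^2 n\rfloor$, and $x(n)=a(b(n))-b(a(n))$. *)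

From Stdlib Require Import Reals ZArith Arith List.
Import ListNotations.

Fixpoint fib (n : nat) : nat :=
  match n with
  | O => O
  | S m => match m with
           | O => 1
           | S k => fib m + fib k
           end
  end.

Fixpoint fib_index_from (fuel k n : nat) : nat :=
  match fuel with
  | O => k
  | S f => if Nat.leb n (fib (S k)) then k else fib_index_from f (S k) n
  end.

(* For n >= 2: the unique j >= 2 with F_j < n <= F_{j+1}
   (= the least j >= 2 with n <= F_{j+1}; fuel n suffices since n <= F_{n+3}). *)
Definition fib_index (n : nat) : nat := fib_index_from n 2 n.

(* a(0)=0, a(1)=1, a(n) = F_{j+1} - a(n - F_j) for n >= 2 (OEIS A105774).
   Fuel n suffices because the argument strictly decreases.  The subtraction
   is exact: a(m) <= F_{k+1} whenever m <= F_{k+1}. *)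
Fixpoint a_fuel (fuel n : nat) : nat :=
  match fuel with
  | O => O
  | S f =>
      match n with
      | O => O
      | S O => 1
      | _ => let j := fib_index n in fib (S j) - a_fuel f (n - fib j)
      end
  end.

Definition a (n : nat) : nat := a_fuel n n.

Open Scope R_scope.

Definition phi : R := (1 + sqrt 5) / 2.

(* Int_part r = up r - 1 is the floor of r. *)
Definition b (n : nat) : nat := Z.to_nat (Int_part (phi * INR n)).
Definition d (n : nat) : nat := Z.to_nat (Int_part (phi ^ 2 * INR n)).

Close Scope R_scope.

Definition x (n : nat) : Z := (Z.of_nat (a (b n)) - Z.of_nat (b (a n)))%Z.

Inductive letter : Set := Lb | Ld.

Definition letter_fun (l : letter) : nat -> nat :=
  match l with Lb => b | Ld => d end.

Definition apply_word (u : list letter) (n : nat) : nat :=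
  fold_right letter_fun n u.

Definition count_b (u : list letter) : nat :=
  length (filter (fun l => match l with Lb => true | Ld => false end) u).
Definition count_d (u : list letter) : nat :=
  length (filter (fun l => match l with Ld => true | Lb => false end) u).

(* C on the reversed word: r = rev u, so the head of r is the LAST letter of u. *)
Fixpoint C_rev (r : list letter) : Z :=
  match r with
  | [] => 0%Z
  | [Lb] => 0%Z
  | [Ld] => 1%Z
  | Lb :: r' => (Z.of_nat (fib (count_b r + 2 * count_d r - 1)) + C_rev r')%Z
  | Ld :: r' => (Z.of_nat (fib (count_b r + 2 * count_d r - 1)) - C_rev r')%Z
  end.

Definition C_word (u : list letter) : Z := C_rev (rev u).

(* Write [n - 1 = F_(j1) + ... + F_(jr)] in Zeckendorf form.  The recursion for [a] peels
   off the largest term, so [a(n)] is the alternating sum [F_(j1+1) - F_(j2+1) + ...] up to a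
   sign correction depending on the parity of [r].  Because [phi F_j = F_(j+1) - (-1/phi)^j]
   and the errors of a Zeckendorf sum lie in [(-1/phi^2, 1/phi]], [b] shifts every index by
   one, and [d = b + id] shifts them by two and appends [F_2].  Hence [x(n)] is the parity
   of [r], and [a(b(b n))], [a(d n)], [a(b(d n))], [x(b n)], [x(d n)] are explicit linear
   combinations of [a(b n)], [a(n)] and [2x(n) - 1]; the theorem follows by induction on the
   word, adding letters on the right where the Fibonacci recurrence absorbs them. *)

From Stdlib Require Import Reals ZArith Arith List Lia Lra.
Import ListNotations.

Lemma fib_SS k : fib (S (S k)) = fib (S k) + fib k.
Proof. reflexivity. Qed.

Lemma fib_succ_pred j : 1 <= j -> fib (S j) = fib j + fib (j - 1).
Proof. intros Hj. destruct j as [|j]; [lia|]. now rewrite fib_SS, Nat.sub_1_r. Qed.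

Lemma fib_le_succ k : fib k <= fib (S k).
Proof. destruct k as [|[|k]]; simpl; lia. Qed.

Lemma fib_monotone m n : m <= n -> fib m <= fib n.
Proof. induction 1 as [|n _ IH]; [lia|]. pose proof (fib_le_succ n); lia. Qed.

Lemma fib_pos k : 1 <= k -> 1 <= fib k.
Proof. intros Hk. pose proof (fib_monotone 1 k Hk). simpl in *; lia. Qed.

Lemma fib_lt_cancel m n : fib m < fib n -> m < n.
Proof.
  intros Hlt. destruct (le_lt_dec n m) as [Hle|]; [|assumption].
  pose proof (fib_monotone _ _ Hle); lia.
Qed.

Lemma index_le_fib k : k <= fib k + 1.
Proof.
  induction k as [k IH] using lt_wf_ind.
  destruct k as [|[|[|k]]]; [simpl; lia ..|].
  rewrite fib_SS. pose proof (IH (S (S k)) ltac:(lia)).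
  pose proof (fib_pos (S k) ltac:(lia)). lia.
Qed.

Lemma fib_index_from_spec fuel k n j :
  k <= j -> j - k <= fuel -> n <= fib (S j) ->
  (forall i, k <= i < j -> fib (S i) < n) ->
  fib_index_from fuel k n = j.
Proof.
  revert k. induction fuel as [|fuel IH]; intros k Hkj Hfuel Hn Hbelow; cbn [fib_index_from].
  - lia.
  - destruct (Nat.eq_dec k j) as [->|Hne].
    + apply Nat.leb_le in Hn. now rewrite Hn.
    + assert (fib (S k) < n) by (apply Hbelow; lia).
      replace (Nat.leb n (fib (S k))) with false by (symmetry; apply Nat.leb_gt; lia).
      apply IH; try lia. intros i Hi. apply Hbelow. lia.
Qed.

Lemma fib_index_spec n j : 2 <= j -> fib j < n <= fib (S j) -> fib_index n = j.
Proof.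
  intros Hj [Hlo Hhi]. apply fib_index_from_spec; try lia.
  - pose proof (index_le_fib j). lia.
  - intros i Hi. pose proof (fib_monotone (S i) j ltac:(lia)). lia.
Qed.

Lemma fib_index_from_ge fuel k n : 2 <= k -> 2 <= fib_index_from fuel k n.
Proof.
  revert k. induction fuel as [|fuel IH]; intros k Hk; cbn [fib_index_from]; [lia|].
  destruct (Nat.leb n (fib (S k))); [lia|]. apply IH. lia.
Qed.

Lemma a_fuel_enough f g n : n <= f -> n <= g -> a_fuel f n = a_fuel g n.
Proof.
  revert g n. induction f as [|f IH]; intros g n Hf Hg.
  - replace n with 0 by lia. now destruct g.
  - destruct g as [|g]; [replace n with 0 by lia; reflexivity|].
    destruct n as [|[|m]]; [reflexivity ..|]. cbn [a_fuel]. f_equal.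
    assert (1 <= fib (fib_index (S (S m)))).
    { apply fib_pos. pose proof (fib_index_from_ge (S (S m)) 2 (S (S m)) (le_n 2)).
      unfold fib_index. lia. }
    apply IH; lia.
Qed.

Lemma a_step n j : 2 <= j -> fib j < n <= fib (S j) -> a n = fib (S j) - a (n - fib j).
Proof.
  intros Hj Hn. pose proof (fib_pos j ltac:(lia)).
  assert (2 <= n).
  { rewrite (fib_succ_pred j) in Hn by lia. pose proof (fib_pos (j - 1) ltac:(lia)). lia. }
  destruct n as [|[|m]]; [lia ..|].
  set (n := S (S m)) in *.
  assert (Hunfold : a n = fib (S (fib_index n)) - a_fuel (S m) (n - fib (fib_index n)))
    by reflexivity.
  rewrite Hunfold, (fib_index_spec _ j Hj Hn). f_equal. apply a_fuel_enough; lia.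
Qed.

(** * Zeckendorf representations *)

(* Largest index first; index 1 is excluded since [F_1 = F_2]. *)
Fixpoint zeck (L : list nat) : Prop :=
  match L with
  | [] => True
  | j :: t => 2 <= j /\ Forall (fun e => e + 2 <= j) t /\ zeck t
  end.

Fixpoint zeck_value (L : list nat) : nat :=
  match L with
  | [] => 0
  | j :: t => fib j + zeck_value t
  end.

Lemma zeck_value_lt h L :
  zeck L -> Forall (fun e => e <= h) L -> zeck_value L < fib (S h).
Proof.
  revert h. induction L as [|j t IH]; intros h HL Hh; cbn [zeck_value].
  - pose proof (fib_pos (S h) ltac:(lia)). lia.
  - destruct HL as [Hj [Hgap Ht]]. inversion_clear Hh as [|? ? Hjh _].
    assert (zeck_value t < fib (S (j - 2))).
    { apply IH; [exact Ht|]. eapply Forall_impl; [|exact Hgap]. simpl; lia. }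
    replace (S (j - 2)) with (j - 1) in * by lia.
    pose proof (fib_succ_pred j ltac:(lia)). pose proof (fib_monotone (S j) (S h) ltac:(lia)).
    lia.
Qed.

Lemma fib_le_zeck_value L : Forall (fun e => fib e <= zeck_value L) L.
Proof.
  induction L as [|j t IH]; constructor; cbn [zeck_value]; [lia|].
  eapply Forall_impl; [|exact IH]. simpl; lia.
Qed.

Lemma fib_bracket p : 1 <= p -> exists j, 2 <= j /\ fib j <= p < fib (S j).
Proof.
  induction p as [|p IH]; intros Hp; [lia|]. destruct p as [|p].
  - exists 2. simpl. lia.
  - destruct IH as [j [Hj [Hlo Hhi]]]; [lia|].
    destruct (Nat.eq_dec (S (S p)) (fib (S j))) as [Heq|Hne].
    + exists (S j). rewrite fib_SS. pose proof (fib_pos j). lia.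
    + exists j. lia.
Qed.

Lemma zeckendorf p : exists L, zeck L /\ zeck_value L = p.
Proof.
  induction p as [p IH] using lt_wf_ind. destruct p as [|p].
  - now exists [].
  - destruct (fib_bracket (S p)) as [j [Hj [Hlo Hhi]]]; [lia|].
    pose proof (fib_pos j ltac:(lia)). pose proof (fib_succ_pred j ltac:(lia)).
    destruct (IH (S p - fib j)) as [L [HL Hval]]; [lia|].
    exists (j :: L). split; [|cbn [zeck_value]; lia].
    split; [exact Hj|]. split; [|exact HL].
    pose proof (fib_le_zeck_value L) as Hfib. rewrite Forall_forall in *.
    intros e He. specialize (Hfib e He).
    assert (e < j - 1) by (apply fib_lt_cancel; lia). lia.
Qed.

Lemma zeck_repr n : 1 <= n -> exists L, zeck L /\ n = zeck_value L + 1.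
Proof.
  intros Hn. destruct (zeckendorf (n - 1)) as [L [HL Hval]]. exists L. split; [exact HL | lia].
Qed.

Lemma zeck_snoc l y :
  zeck (l ++ [y]) <-> zeck l /\ 2 <= y /\ Forall (fun e => y + 2 <= e) l.
Proof.
  induction l as [|z l IH]; cbn [app zeck].
  - split; [intros [Hy _]; repeat split; auto | intros [_ [Hy _]]; repeat split; auto].
  - rewrite Forall_app, IH. split.
    + intros [Hz [[Hgap Hyz] [Hl [Hy Hbelow]]]]. inversion_clear Hyz.
      repeat split; auto.
    + intros [[Hz [Hgap Hl]] [Hy Hbelow]]. inversion_clear Hbelow.
      repeat split; auto.
Qed.

Lemma zeck_ge2 L : zeck L -> Forall (fun e => 2 <= e) L.
Proof.
  induction L as [|j t IH]; intros HL; constructor; destruct HL as [Hj [Hgap Ht]]; auto.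
Qed.

Lemma zeck_map_S L : zeck L -> zeck (map S L).
Proof.
  induction L as [|j t IH]; intros HL; [exact I|]. destruct HL as [Hj [Hgap Ht]].
  split; [lia|]. split; [|auto]. apply Forall_map. eapply Forall_impl; [|exact Hgap]. simpl; lia.
Qed.

Lemma zeck_value_map_SS L :
  zeck_value (map S (map S L)) = zeck_value (map S L) + zeck_value L.
Proof. induction L as [|j t IH]; cbn [map zeck_value]; [reflexivity|]. rewrite fib_SS. lia. Qed.

Lemma zeck_value_app l l' : zeck_value (l ++ l') = zeck_value l + zeck_value l'.
Proof. induction l as [|j t IH]; cbn [app zeck_value]; lia. Qed.

Fixpoint alt_fib (c : nat) (L : list nat) : Z :=
  match L with
  | [] => 0
  | j :: t => Z.of_nat (fib (j + c)) - alt_fib c t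
  end%Z.

Fixpoint parity (L : list nat) : Z :=
  match L with
  | [] => 0
  | _ :: t => 1 - parity t
  end%Z.

Lemma parity_01 L : parity L = 0%Z \/ parity L = 1%Z.
Proof. induction L; cbn [parity]; lia. Qed.

Lemma parity_map f L : parity (map f L) = parity L.
Proof. induction L as [|j t IH]; cbn [map parity]; congruence. Qed.

Lemma parity_snoc l y : parity (l ++ [y]) = (1 - parity l)%Z.
Proof. induction l as [|j t IH]; cbn [app parity]; lia. Qed.

Lemma alt_fib_bounds c h L :
  zeck L -> Forall (fun e => e <= h) L -> (0 <= alt_fib c L <= Z.of_nat (fib (h + c)))%Z.
Proof.
  revert h. induction L as [|j t IH]; intros h HL Hh; cbn [alt_fib]; [lia|].
  destruct HL as [Hj [Hgap Ht]]. inversion_clear Hh as [|? ? Hjh _].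
  assert (Hrest := IH (j - 2) Ht ltac:(eapply Forall_impl; [|exact Hgap]; simpl; lia)).
  pose proof (fib_monotone (j - 2 + c) (j + c) ltac:(lia)).
  pose proof (fib_monotone (j + c) (h + c) ltac:(lia)). lia.
Qed.

Lemma a_zeck L : zeck L -> Z.of_nat (a (zeck_value L + 1)) = (alt_fib 1 L + 1 - 2 * parity L)%Z.
Proof.
  induction L as [|j t IH]; intros HL; [reflexivity|].
  destruct HL as [Hj [Hgap Ht]].
  assert (Hbelow : Forall (fun e => e <= j - 2) t)
    by (eapply Forall_impl; [|exact Hgap]; simpl; lia).
  pose proof (zeck_value_lt _ _ Ht Hbelow) as Hlt. replace (S (j - 2)) with (j - 1) in Hlt by lia.
  pose proof (alt_fib_bounds 1 _ _ Ht Hbelow) as Hbnd.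
  replace (j - 2 + 1) with (j - 1) in Hbnd by lia.
  pose proof (fib_succ_pred j ltac:(lia)). pose proof (fib_pos j ltac:(lia)).
  pose proof (parity_01 t). specialize (IH Ht).
  cbn [zeck_value alt_fib parity].
  rewrite (a_step _ j) by (auto; lia).
  replace (fib j + zeck_value t + 1 - fib j) with (zeck_value t + 1) by lia.
  rewrite Nat2Z.inj_sub by lia. rewrite IH, Nat.add_1_r. lia.
Qed.

Lemma alt_fib_map_S c L : alt_fib c (map S L) = alt_fib (S c) L.
Proof.
  induction L as [|j t IH]; cbn [map alt_fib]; [reflexivity|].
  rewrite IH, Nat.add_succ_comm. reflexivity.
Qed.

Lemma alt_fib_SS c L : alt_fib (S (S c)) L = (alt_fib (S c) L + alt_fib c L)%Z.
Proof.
  induction L as [|j t IH]; cbn [alt_fib]; [reflexivity|].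
  rewrite IH, <- !Nat.add_succ_comm, !Nat.add_succ_l, fib_SS. lia.
Qed.

Lemma alt_fib_snoc c l y :
  alt_fib c (l ++ [y]) = (alt_fib c l + (1 - 2 * parity l) * Z.of_nat (fib (y + c)))%Z.
Proof. induction l as [|j t IH]; cbn [app alt_fib parity]; [lia|]. rewrite IH. lia. Qed.

(** * The golden ratio and its conjugate *)

Open Scope R_scope.

(* [- tau = 1 - phi] is the conjugate root of [X^2 = X + 1]. *)
Definition tau : R := phi - 1.

Lemma phi_tau : phi = tau + 1.
Proof. unfold tau; ring. Qed.

Lemma tau_sq : tau * tau = 1 - tau.
Proof.
  assert (H5 : sqrt 5 * sqrt 5 = 5) by (apply sqrt_sqrt; lra).
  unfold tau, phi. nra.
Qed.

Lemma tau_bounds : / 2 < tau < 1.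
Proof.
  assert (H5 : sqrt 5 * sqrt 5 = 5) by (apply sqrt_sqrt; lra).
  pose proof (sqrt_pos 5). unfold tau, phi. split; nra.
Qed.

Lemma tau_pow_le p k : tau ^ (p + k) <= tau ^ p.
Proof.
  pose proof tau_bounds. rewrite pow_add.
  assert (0 < tau ^ p) by (apply pow_lt; lra).
  assert (tau ^ k <= 1).
  { destruct k as [|k]; [simpl; lra|].
    pose proof (pow_lt_1_compat tau (S k) ltac:(lra) ltac:(lia)). lra. }
  nra.
Qed.

Lemma tau_pow_SS q : tau ^ S (S q) + tau ^ S q = tau ^ q.
Proof.
  replace (S (S q)) with (q + 2)%nat by lia. rewrite pow_add.
  replace (tau ^ 2) with (1 - tau) by (pose proof tau_sq; simpl; lra). simpl; ring.
Qed.

Lemma conj_pow_SS k : (- tau) ^ S (S k) = (- tau) ^ S k + (- tau) ^ k.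
Proof.
  replace (S (S k)) with (2 + k)%nat by lia. rewrite pow_add.
  replace ((- tau) ^ 2) with (1 + - tau) by (pose proof tau_sq; simpl; nra). simpl; ring.
Qed.

Lemma phi_fib j : phi * INR (fib j) = INR (fib (S j)) - (- tau) ^ j.
Proof.
  enough (H : phi * INR (fib j) = INR (fib (S j)) - (- tau) ^ j /\
              phi * INR (fib (S j)) = INR (fib (S (S j))) - (- tau) ^ S j) by apply H.
  induction j as [|j [IH1 IH2]].
  - rewrite phi_tau. simpl. split; ring.
  - split; [exact IH2|].
    rewrite (fib_SS j) at 1. rewrite plus_INR, Rmult_plus_distr_l, IH1, IH2.
    rewrite (fib_SS (S j)), plus_INR, conj_pow_SS. ring.
Qed.

Fixpoint conj_sum (L : list nat) : R :=
  match L with [] => 0 | j :: t => (- tau) ^ j + conj_sum t end.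

Fixpoint conj_alt (c : nat) (L : list nat) : R :=
  match L with [] => 0 | j :: t => (- tau) ^ (j + c) - conj_alt c t end.

Fixpoint tau_sum (L : list nat) : R :=
  match L with [] => 0 | j :: t => tau ^ j + tau_sum t end.

Lemma phi_zeck_value L : phi * INR (zeck_value L) = INR (zeck_value (map S L)) - conj_sum L.
Proof.
  induction L as [|j t IH]; cbn [zeck_value map conj_sum]; [simpl; ring|].
  rewrite !plus_INR, Rmult_plus_distr_l, IH, phi_fib. ring.
Qed.

Lemma phi_alt_fib c L : phi * IZR (alt_fib c L) = IZR (alt_fib (S c) L) - conj_alt c L.
Proof.
  induction L as [|j t IH]; cbn [alt_fib conj_alt]; [simpl; ring|].
  rewrite !minus_IZR, <- !INR_IZR_INZ, Rmult_minus_distr_l, IH, phi_fib.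
  replace (j + S c)%nat with (S (j + c)) by lia. ring.
Qed.

Lemma Rabs_conj_pow k : Rabs ((- tau) ^ k) = tau ^ k.
Proof.
  pose proof tau_bounds. rewrite <- RPow_abs, Rabs_Ropp, Rabs_pos_eq by lra. reflexivity.
Qed.

Lemma Rabs_conj_sum L : Rabs (conj_sum L) <= tau_sum L.
Proof.
  induction L as [|j t IH]; cbn [conj_sum tau_sum]; [rewrite Rabs_R0; lra|].
  pose proof (Rabs_triang ((- tau) ^ j) (conj_sum t)). rewrite Rabs_conj_pow in *. lra.
Qed.

Lemma Rabs_conj_alt c L : Rabs (conj_alt c L) <= tau ^ c * tau_sum L.
Proof.
  induction L as [|j t IH]; cbn [conj_alt tau_sum]; [rewrite Rabs_R0, Rmult_0_r; lra|].
  pose proof (Rabs_triang ((- tau) ^ (j + c)) (- conj_alt c t)).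
  rewrite Rabs_conj_pow, Rabs_Ropp, (pow_add tau) in H.
  unfold Rminus. rewrite Rmult_plus_distr_l, (Rmult_comm (tau ^ c)). lra.
Qed.

Lemma tau_sum_snoc l y : tau_sum (l ++ [y]) = tau_sum l + tau ^ y.
Proof. induction l as [|z l IH]; cbn [app tau_sum]; [ring|]. rewrite IH. ring. Qed.

Lemma conj_sum_snoc l y : conj_sum (l ++ [y]) = conj_sum l + (- tau) ^ y.
Proof. induction l as [|z l IH]; cbn [app conj_sum]; [ring|]. rewrite IH. ring. Qed.

(* Since [tau^(q+2) + tau^(q+1) = tau^q], the sum telescopes from its smallest index. *)
Lemma tau_sum_lt (p : nat) L :
  zeck L -> Forall (fun e => (p + 1 <= e)%nat) L -> tau_sum L < tau ^ p.
Proof.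
  revert p. induction L as [|y l IH] using rev_ind; intros p HL Hp.
  - simpl. apply pow_lt. pose proof tau_bounds; lra.
  - apply zeck_snoc in HL as [HL [Hy Hbelow]].
    apply Forall_app in Hp as [_ Hp]. inversion_clear Hp as [|? ? Hpy _].
    rewrite tau_sum_snoc. destruct y as [|q]; [lia|].
    assert (tau_sum l < tau ^ S (S q)).
    { apply IH; [exact HL|]. eapply Forall_impl; [|exact Hbelow]. simpl; lia. }
    pose proof (tau_pow_SS q).
    pose proof (tau_pow_le p (q - p)) as Hq. replace (p + (q - p))%nat with q in Hq by lia.
    lra.
Qed.

Lemma conj_pow_parity r :
  (Nat.Even r /\ (- tau) ^ r = tau ^ r) \/ (Nat.Odd r /\ (- tau) ^ r = - tau ^ r).
Proof.
  replace (- tau) with (-1 * tau) by ring. rewrite Rpow_mult_distr.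
  destruct (Nat.Even_or_Odd r) as [[k ->]|[k ->]].
  - left. split; [now exists k|]. rewrite pow_1_even. ring.
  - right. split; [now exists k|]. replace (2 * k + 1)%nat with (S (2 * k)) by lia.
    rewrite pow_1_odd. ring.
Qed.

(* The error [N' - phi N] of a Zeckendorf sum is governed by its smallest index [y]:
   the remaining terms add up to less than [tau^(y+1)]. *)
Lemma conj_sum_bounds L : zeck L -> - (tau * tau) < conj_sum L <= tau.
Proof.
  pose proof tau_bounds. pose proof tau_sq.
  destruct L as [|y l _] using rev_ind; intros HL; [simpl; nra|].
  apply zeck_snoc in HL as [HL [Hy Hbelow]].
  rewrite conj_sum_snoc. destruct y as [|[|r]]; [lia ..|].
  assert (Htail : Rabs (conj_sum l) < tau ^ r * (tau * tau * tau)).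
  { eapply Rle_lt_trans; [apply Rabs_conj_sum|].
    replace (tau ^ r * (tau * tau * tau)) with (tau ^ S (S (S r))) by (simpl; ring).
    apply tau_sum_lt; [exact HL|]. eapply Forall_impl; [|exact Hbelow]. simpl; lia. }
  apply Rabs_def2 in Htail as [Hup Hlo].
  replace ((- tau) ^ S (S r)) with ((- tau) ^ r * (tau * tau)) by (simpl; ring).
  assert (0 < tau ^ r) by (apply pow_lt; lra).
  destruct (conj_pow_parity r) as [[_ ->]|[[k Hk] ->]].
  - pose proof (tau_pow_le 0 r). simpl in *. nra.
  - pose proof (tau_pow_le 1 (r - 1)) as Hle. replace (1 + (r - 1))%nat with r in Hle by lia.
    simpl in Hle. nra.
Qed.

(** * [b], [d] and [x] on Zeckendorf representations *)

Lemma b_char n z : IZR z <= phi * INR n < IZR z + 1 -> Z.of_nat (b n) = z.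
Proof.
  intros Hz. assert (0 <= phi * INR n).
  { rewrite phi_tau. pose proof tau_bounds. pose proof (pos_INR n). nra. }
  assert (-1 < z)%Z by (apply lt_IZR; lra).
  unfold b. rewrite <- (Int_part_spec _ z) by lra. apply Z2Nat.id. lia.
Qed.

Lemma d_eq_b_add n : d n = (b n + n)%nat.
Proof.
  assert (Hfloor := base_Int_part (phi * INR n)).
  assert (Hb := b_char n (Int_part (phi * INR n)) ltac:(lra)).
  apply Nat2Z.inj. rewrite Nat2Z.inj_add, Hb. unfold d.
  rewrite <- (Int_part_spec _ (Int_part (phi * INR n) + Z.of_nat n)).
  - apply Z2Nat.id. lia.
  - rewrite plus_IZR, <- INR_IZR_INZ.
    replace (phi ^ 2) with (phi + 1) by (rewrite phi_tau; pose proof tau_sq; simpl; nra).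
    lra.
Qed.

Lemma b_zeck L : zeck L -> b (zeck_value L + 1) = (zeck_value (map S L) + 1)%nat.
Proof.
  intros HL. pose proof (conj_sum_bounds L HL). pose proof tau_sq.
  apply Nat2Z.inj, b_char.
  rewrite <- INR_IZR_INZ, !plus_INR, Rmult_plus_distr_l, phi_zeck_value, phi_tau. simpl. lra.
Qed.

Lemma b_a_zeck L :
  zeck L -> Z.of_nat (b (a (zeck_value L + 1))) = (alt_fib 2 L + 1 - 3 * parity L)%Z.
Proof.
  intros HL. pose proof tau_bounds. pose proof tau_sq.
  assert (Hsum : tau_sum L < tau ^ 1).
  { apply tau_sum_lt; [exact HL|]. eapply Forall_impl; [|apply zeck_ge2, HL]. simpl; lia. }
  pose proof (Rabs_conj_alt 1 L) as Halt. rewrite pow_1 in Hsum, Halt.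
  assert (Herr : Rabs (conj_alt 1 L) < tau * tau) by nra.
  apply Rabs_def2 in Herr as [Hup Hlo].
  apply b_char. rewrite INR_IZR_INZ, a_zeck by exact HL.
  rewrite !minus_IZR, !plus_IZR, !mult_IZR, Rmult_minus_distr_l, Rmult_plus_distr_l.
  rewrite phi_alt_fib, phi_tau.
  destruct (parity_01 L) as [-> | ->]; simpl; lra.
Qed.

Lemma x_zeck L : zeck L -> x (zeck_value L + 1) = parity L.
Proof.
  intros HL. unfold x. rewrite b_a_zeck, b_zeck, a_zeck by auto using zeck_map_S.
  rewrite alt_fib_map_S, parity_map. lia.
Qed.

Close Scope R_scope.

(* [d(n) = b(n) + n] shifts every index by two and appends [F_2 = 1]. *)
Definition d_repr (L : list nat) : list nat := map S (map S L) ++ [2].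

Lemma zeck_d_repr L : zeck L -> zeck (d_repr L).
Proof.
  intros HL. apply zeck_snoc. split; [auto using zeck_map_S|]. split; [lia|].
  rewrite !Forall_map. eapply Forall_impl; [|apply zeck_ge2, HL]. simpl; lia.
Qed.

Lemma d_zeck L : zeck L -> d (zeck_value L + 1) = zeck_value (d_repr L) + 1.
Proof.
  intros HL. rewrite d_eq_b_add, b_zeck by exact HL.
  unfold d_repr. rewrite zeck_value_app, zeck_value_map_SS. simpl. lia.
Qed.

(** * The letter identities *)

Section LetterIdentities.

Variable n : nat.
Hypothesis n_pos : 1 <= n.

Lemma b_pos : 1 <= b n.
Proof. destruct (zeck_repr n n_pos) as [L [HL ->]]. rewrite b_zeck by exact HL. lia. Qed.

Lemma d_pos : 1 <= d n.
Proof. rewrite d_eq_b_add. lia. Qed.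

Lemma a_d : Z.of_nat (a (d n)) = (Z.of_nat (a (b n)) + Z.of_nat (a n) + (2 * x n - 1))%Z.
Proof.
  destruct (zeck_repr n n_pos) as [L [HL ->]].
  rewrite d_zeck, b_zeck, x_zeck, !a_zeck by auto using zeck_d_repr, zeck_map_S.
  unfold d_repr. rewrite alt_fib_snoc, parity_snoc, !alt_fib_map_S, !parity_map, alt_fib_SS.
  cbn [fib Nat.add]. lia.
Qed.

Lemma a_bb : Z.of_nat (a (b (b n))) = (Z.of_nat (a (b n)) + Z.of_nat (a n) + (2 * x n - 1))%Z.
Proof.
  destruct (zeck_repr n n_pos) as [L [HL ->]].
  rewrite !b_zeck, x_zeck, !a_zeck by auto using zeck_map_S.
  rewrite !alt_fib_map_S, !parity_map, alt_fib_SS. lia.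
Qed.

Lemma a_bd :
  Z.of_nat (a (b (d n))) = (2 * Z.of_nat (a (b n)) + Z.of_nat (a n) + (2 * x n - 1))%Z.
Proof.
  destruct (zeck_repr n n_pos) as [L [HL ->]].
  rewrite d_zeck, !b_zeck, x_zeck, !a_zeck by auto using zeck_d_repr, zeck_map_S.
  unfold d_repr. rewrite map_app. cbn [map].
  rewrite alt_fib_snoc, parity_snoc, !alt_fib_map_S, !parity_map, !alt_fib_SS.
  cbn [fib Nat.add]. lia.
Qed.

Lemma x_b : x (b n) = x n.
Proof.
  destruct (zeck_repr n n_pos) as [L [HL ->]].
  rewrite b_zeck, !x_zeck by auto using zeck_map_S. apply parity_map.
Qed.

Lemma x_d : x (d n) = (1 - x n)%Z.
Proof.
  destruct (zeck_repr n n_pos) as [L [HL ->]].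
  rewrite d_zeck, !x_zeck by auto using zeck_d_repr.
  unfold d_repr. rewrite parity_snoc, !parity_map. reflexivity.
Qed.

End LetterIdentities.

Definition weight (u : list letter) : nat := count_b u + 2 * count_d u.

Lemma weight_cons_b r : weight (Lb :: r) = S (weight r).
Proof. unfold weight, count_b, count_d. simpl. lia. Qed.

Lemma weight_cons_d r : weight (Ld :: r) = S (S (weight r)).
Proof. unfold weight, count_b, count_d. simpl. lia. Qed.

Lemma weight_rev u : weight (rev u) = weight u.
Proof. unfold weight, count_b, count_d. now rewrite !filter_rev, !length_rev. Qed.

Lemma weight_snoc u l : weight (u ++ [l]) = weight (l :: u).
Proof.
  unfold weight, count_b, count_d. rewrite !filter_app, !length_app. destruct l; simpl; lia.
Qed.

Lemma weight_pos u : u <> [] -> 1 <= weight u.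
Proof.
  intros Hu.
  destruct u as [|[|] u]; [congruence | rewrite weight_cons_b | rewrite weight_cons_d]; lia.
Qed.

Lemma apply_word_snoc u l n : apply_word (u ++ [l]) n = apply_word u (letter_fun l n).
Proof. unfold apply_word. now rewrite fold_right_app. Qed.

Lemma rev_neq_nil {A} (u : list A) : u <> [] -> rev u <> [].
Proof. intros Hu E. apply Hu. now rewrite <- (rev_involutive u), E. Qed.

Lemma C_rev_cons_b r : r <> [] -> C_rev (Lb :: r) = (Z.of_nat (fib (weight r)) + C_rev r)%Z.
Proof.
  destruct r as [|l r]; [congruence|]. intros _.
  change (C_rev (Lb :: l :: r))
    with (Z.of_nat (fib (weight (Lb :: l :: r) - 1)) + C_rev (l :: r))%Z.
  now rewrite weight_cons_b, Nat.sub_1_r.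
Qed.

Lemma C_rev_cons_d r :
  r <> [] -> C_rev (Ld :: r) = (Z.of_nat (fib (S (weight r))) - C_rev r)%Z.
Proof.
  destruct r as [|l r]; [congruence|]. intros _.
  change (C_rev (Ld :: l :: r))
    with (Z.of_nat (fib (weight (Ld :: l :: r) - 1)) - C_rev (l :: r))%Z.
  now rewrite weight_cons_d, Nat.sub_1_r.
Qed.

Lemma C_word_snoc_b u :
  u <> [] -> C_word (u ++ [Lb]) = (Z.of_nat (fib (weight u)) + C_word u)%Z.
Proof.
  intros Hu. unfold C_word. rewrite rev_app_distr, <- (weight_rev u).
  apply C_rev_cons_b, rev_neq_nil, Hu.
Qed.

Lemma C_word_snoc_d u :
  u <> [] -> C_word (u ++ [Ld]) = (Z.of_nat (fib (S (weight u))) - C_word u)%Z.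
Proof.
  intros Hu. unfold C_word. rewrite rev_app_distr, <- (weight_rev u).
  apply C_rev_cons_d, rev_neq_nil, Hu.
Qed.

Lemma a_apply_word u n : u <> [] -> 1 <= n ->
  Z.of_nat (a (apply_word u n)) =
    (Z.of_nat (fib (weight u)) * Z.of_nat (a (b n))
     + Z.of_nat (fib (weight u - 1)) * Z.of_nat (a n)
     + C_word u * (2 * x n - 1))%Z.
Proof.
  revert n. induction u as [|l v IH] using rev_ind; intros n Hu Hn; [congruence|].
  rewrite apply_word_snoc, weight_snoc.
  destruct v as [|l' v'] eqn:Ev.
  - destruct l; cbn [letter_fun apply_word fold_right app].
    + change (weight [Lb]) with 1. change (C_word [Lb]) with 0%Z. cbn [fib Nat.sub]. lia.
    + change (weight [Ld]) with 2. change (C_word [Ld]) with 1%Z. cbn [fib Nat.sub Nat.add].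
      rewrite (a_d n Hn). lia.
  - rewrite <- Ev in *. assert (Hv : v <> []) by (rewrite Ev; discriminate).
    pose proof (weight_pos v Hv).
    destruct (weight v) as [|k] eqn:Ek; [lia|].
    destruct l; cbn [letter_fun].
    + rewrite C_word_snoc_b, weight_cons_b, Ek, IH, (a_bb n Hn), (x_b n Hn) by auto using b_pos.
      cbn [Nat.sub]. rewrite Nat.sub_0_r, fib_SS, Nat2Z.inj_add. ring.
    + rewrite C_word_snoc_d, weight_cons_d, Ek, IH, (a_bd n Hn), (a_d n Hn), (x_d n Hn)
        by auto using d_pos.
      cbn [Nat.sub]. rewrite Nat.sub_0_r, !fib_SS, !Nat2Z.inj_add. ring.
Qed.

Theorem theorem23 (u : list letter) (n : nat) :
  u <> [] -> (1 <= n)%nat ->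
  let i := count_b u in
  let j := count_d u in
  Z.of_nat (a (apply_word u n)) =
    (Z.of_nat (fib (i + 2 * j)) * Z.of_nat (a (b n))
     + Z.of_nat (fib (i + 2 * j - 1)) * Z.of_nat (a n)
     + C_word u * (2 * x n - 1))%Z.
Proof. intros Hu Hn. exact (a_apply_word u n Hu Hn). Qed.
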